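(* For every $t\ge2$ and $\sigma\in S_t$, the pattern set $\{(\sigma,[t-2])\}$ (the vincular pattern $\sigma_1\cdots\sigma_{t-1}\text{-}\sigma_t$) admits a finite enumeration scheme of depth $t-1$ in which every reversibly deletable set $R_p$ is either $\emptyset$ or $\{1\}$.
   Context: Vincular pattern $(\sigma,X)$, $\sigma\in S_\ell$, $X\subseteq[\ell-1]$: $\pi$ contains it if some subsequence $\pi_{i_1}\cdots\pi_{i_\ell}$ ($i_1<\dots<i_\ell$) is order-isomorphic to $\sigma$ with $i_{x+1}=i_x+1$ for $x\in X$. For $p\in S_k$ and $w\in[n]^k$ with distinct letters order-isomorphic to $p$, $S_n^B(p;w)$ is the set of $B$-avoiding $\pi\in S_n$ with $\pi_i=w_i$ ($i\le k$). Spacing vector $\vec g(n,w)$: $i$-th component $c_i-c_{i-1}-1$, $c_i$ the $i$-th smallest letter of $w$, $c_0=0,c_{k+1}=n+1$. $\vec v\in\mathbb{N}^{k+1}$ is a gap vector for $p$ w.r.t. $B$ if $S_n^B(p;w)=\emptyset$ whenever $\vec g(n,w)\ge\vec v$ componentwise. $d_R$ deletes the entries in positions $R$ and reduces (for words: subtract from each remaining letter the number of deleted letters smaller than it). $R\subseteq[k]$ is reversibly deletable for $p$ w.r.t. $B$ if, for every $n$ and $w$ with $S_n^B(p;w)\ne\emptyset$, $d_R$ is a bijection $S_n^B(p;w)\to S_{n-|R|}^B(d_R(p);d_R(w))$. A child of $p\in S_k$ is any $p'\in S_{k+1}$ with $p'_1\cdots p'_k$ order-isomorphic to $p$. An enumeration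 scheme for $B$ is a set $E$ of triples $(p,G_p,R_p)$, $p$ a permutation, $G_p$ a set of gap vectors for $p$ w.r.t. $B$, $R_p$ a reversibly deletable set for $p$ w.r.t. $B$, such that: $(\epsilon,\emptyset,\emptyset)\in E$ ($\epsilon$ the empty permutation); if $(p,G_p,R_p)\in E$ with $R_p=\emptyset$ and $\vec 0\notin G_p$ then every child of $p$ occurs as the first entry of a triple in $E$; if $R_p\ne\emptyset$ then $d_{R_p}(p)$ occurs as the first entry of a triple in $E$. Its depth is the maximum length of a $p$ occurring in $E$. *)

(* Permutations/words are sequences of naturals with values
   1..n; positions in patterns, X and R are 1-based as in the paper. *)
From mathcomp Require Import all_boot.
Set Implicit Arguments. Unset Strict Implicit. Unset Printing Implicit Defensive.

Definition is_perm (s : seq nat) : bool := perm_eq s (iota 1 (size s)).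

Definition order_iso (a b : seq nat) : Prop :=
  size a = size b /\
  forall i j, i < size a -> j < size a ->
    (nth 0 a i < nth 0 a j) = (nth 0 b i < nth 0 b j).

Definition vpattern := (seq nat * seq nat)%type.

(* pi contains (sigma, X): indices i_1 < ... < i_l (0-based positions here),
   order-isomorphic to sigma, with i_{x+1} = i_x + 1 for x in X (1-based x). *)
Definition contains (pi : seq nat) (pat : vpattern) : Prop :=
  exists I : seq nat,
    [/\ size I = size pat.1, sorted ltn I, all (fun i => i < size pi) I,
        order_iso (map (nth 0 pi) I) pat.1 &
        forall x, x \in pat.2 -> nth 0 I x = (nth 0 I x.-1).+1].

Definition avoids (B : seq vpattern) (pi : seq nat) : Prop :=
  forall b, b \in B -> ~ contains pi b.

(* pi in S_n^B(p;w) (w is the prefix, k = size w = size p) *)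
Definition SnB (B : seq vpattern) (n : nat) (w : seq nat) (pi : seq nat) : Prop :=
  [/\ size pi = n, is_perm pi, avoids B pi & take (size w) pi = w].

Definition prefix_word (p : seq nat) (n : nat) (w : seq nat) : Prop :=
  [/\ size w = size p, uniq w, all (fun x => 0 < x <= n) w & order_iso w p].

(* spacing vector g(n,w): components c_i - c_{i-1} - 1, i = 1..k+1 *)
Definition gvec (n : nat) (w : seq nat) : seq nat :=
  pairmap (fun a b => b - a - 1) 0 (rcons (sort leq w) n.+1).

Definition is_gap_vector (B : seq vpattern) (p : seq nat) (v : seq nat) : Prop :=
  size v = (size p).+1 /\
  forall n w, prefix_word p n w -> all2 leq v (gvec n w) ->
    forall pi, ~ SnB B n w pi.

(* d_R: delete entries in (1-based) positions R and reduce *)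
Definition dR (R : seq nat) (s : seq nat) : seq nat :=
  let del := [seq nth 0 s i | i <- iota 0 (size s) & i.+1 \in R] in
  let keep := [seq nth 0 s i | i <- iota 0 (size s) & i.+1 \notin R] in
  [seq x - count (fun y => y < x) del | x <- keep].

(* R (a subset of [k], represented as a duplicate-free list) is reversibly
   deletable for p w.r.t. B *)
Definition rev_deletable (B : seq vpattern) (p : seq nat) (R : seq nat) : Prop :=
  [/\ uniq R, all (fun r => 0 < r <= size p) R &
   forall n w, prefix_word p n w -> (exists pi, SnB B n w pi) ->
     [/\ forall pi, SnB B n w pi -> SnB B (n - size R) (dR R w) (dR R pi),
         forall pi1 pi2, SnB B n w pi1 -> SnB B n w pi2 -> dR R pi1 = dR R pi2 -> pi1 = pi2
       & forall pi', SnB B (n - size R) (dR R w) pi' ->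
           exists2 pi, SnB B n w pi & dR R pi = pi']].

Definition is_child (p p' : seq nat) : Prop :=
  size p' = (size p).+1 /\ is_perm p' /\ order_iso (take (size p) p') p.

Definition triple := (seq nat * seq (seq nat) * seq nat)%type.

Definition first_entries (E : seq triple) : seq (seq nat) := [seq e.1.1 | e <- E].

Definition enum_scheme (B : seq vpattern) (E : seq triple) : Prop :=
  [/\ ([::], [::], [::]) \in E,
      forall e, e \in E ->
        [/\ is_perm e.1.1,
            forall v, v \in e.1.2 -> is_gap_vector B e.1.1 v
          & rev_deletable B e.1.1 e.2],
      forall e, e \in E -> e.2 = [::] -> nseq (size e.1.1).+1 0 \notin e.1.2 ->
        forall p', is_child e.1.1 p' -> p' \in first_entries E
    & forall e, e \in E -> e.2 != [::] -> dR e.2 e.1.1 \in first_entries E].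

Definition depth (E : seq triple) : nat := foldr maxn 0 [seq size e.1.1 | e <- E].

(* Write t = k + 2 and B = {(sigma, [k])}.  The scheme consists of
     - (p, {}, {})   for every permutation p of length at most k, and
     - (p, {}, {1})  for every permutation p of length k + 1.
   Since no triple has gap vectors and R_p = {} only for |p| <= k, the child
   condition only asks for permutations of length <= k + 1, and deleting the
   first entry of a permutation of length k + 1 lands in length k; the depth
   is therefore k + 1 = t - 1.

   The real content is that R = {1} is reversibly deletable for every p of
   length k + 1.  Let pi in S_n^B(p;w).  An occurrence of (sigma, [k]) whose
   first index is the first position is forced to use the positions 1..k+1,
   i.e. the whole prefix w, followed by one later position.  Any two
   permutations of [n] with prefix w have the same set of later values, so
   such an occurrence in one of them yields one in every other; as some
   member of S_n^B(p;w) avoids B, no permutation with prefix w has such an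
   occurrence.  All other occurrences live in pi_2 ... pi_n and correspond,
   after standardisation, to occurrences in d_{1}(pi).  Hence deleting the
   first letter and re-inserting it are inverse bijections between
   S_n^B(p;w) and S_{n-1}^B(d_1 p; d_1 w). *)

From mathcomp Require Import all_boot zify.
Set Implicit Arguments. Unset Strict Implicit. Unset Printing Implicit Defensive.

(* Standardisation after deleting the value a, and its inverse which makes
   room for a value a. *)
Definition unshift (a x : nat) : nat := x - (a < x).
Definition shift (a y : nat) : nat := if y < a then y else y.+1.

Lemma shiftK a : cancel (shift a) (unshift a).
Proof.
by move=> y; rewrite /unshift /shift; case: (ltnP y a) => ?; case: ltnP => /= ?; lia.
Qed.

Lemma unshiftK a x : x != a -> shift a (unshift a x) = x.
Proof.
rewrite /unshift /shift => /negPf.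
by case: (ltnP a x) => ? /= ?; [|rewrite subn0]; case: ltnP; lia.
Qed.

Lemma ltn_unshift a x y : x != a -> y != a -> (unshift a x < unshift a y) = (x < y).
Proof.
by rewrite /unshift => /negPf ? /negPf ?; case: (ltnP a x); case: (ltnP a y) => /=; lia.
Qed.

Lemma ltn_shift a x y : (shift a x < shift a y) = (x < y).
Proof. by rewrite /shift; case: (ltnP x a); case: (ltnP y a) => /=; lia. Qed.

Lemma unshift_mapK a s : a \notin s -> map (shift a) (map (unshift a) s) = s.
Proof.
move=> as_; rewrite -map_comp -[RHS]map_id; apply/eq_in_map => x xs /=.
by apply: unshiftK; apply: contraNneq as_ => <-.
Qed.

Lemma shift_mapK a s : map (unshift a) (map (shift a) s) = s.
Proof. by rewrite -map_comp -[RHS]map_id; apply/eq_map => x /=; rewrite shiftK. Qed.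

Lemma dR_nil s : dR [::] s = s.
Proof.
have keep_all (l : seq nat) : [seq i <- l | true] = l by elim: l => //= x l ->.
have keep_none (l : seq nat) : [seq i <- l | false] = [::] by elim: l.
rewrite /dR /= keep_all keep_none.
rewrite (@eq_map _ _ _ id); last by move=> x /=; rewrite subn0.
by rewrite map_id -/(mkseq _ _) mkseq_nth.
Qed.

Lemma dR_head a s : dR [:: 1] (a :: s) = map (unshift a) s.
Proof.
rewrite /dR /=.
rewrite (@eq_in_filter _ (fun i => i.+1 \in [:: 1]) pred0); last first.
  by move=> x; rewrite mem_iota inE /= => /andP[H _]; case: x H.
rewrite filter_pred0 (@eq_in_filter _ (fun i => i.+1 \notin [:: 1]) predT); last first.
  by move=> x; rewrite mem_iota inE /= => /andP[H _]; case: x H.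
rewrite filter_predT /= -map_comp -(addn0 1) iotaDl -map_comp.
rewrite (@eq_map _ _ _ (unshift a \o nth 0 s)); last by move=> x /=; rewrite addn0.
by rewrite map_comp -/(mkseq _ _) mkseq_nth.
Qed.

Lemma is_permE s : is_perm s = uniq s && all (fun x => 0 < x <= size s) s.
Proof.
apply/idP/andP.
- move=> H; split; first by rewrite (perm_uniq H) iota_uniq.
  by apply/allP => x; rewrite (perm_mem H) mem_iota; lia.
- case=> U A; apply: uniq_perm => //; first exact: iota_uniq.
  have [] // := @uniq_min_size _ s (iota 1 (size s)) U.
  + by move=> x /(allP A); rewrite mem_iota; lia.
  + by rewrite size_iota.
Qed.

Lemma is_perm_dR_head a s : is_perm (a :: s) -> is_perm (map (unshift a) s).
Proof.
rewrite !is_permE /= => /and3P[/andP[aS U] /andP[a_pos a_le] A].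
have ne_a (x : nat) : x \in s -> x != a by move=> xs; apply: contraNneq aS => <-.
apply/andP; split.
  rewrite map_inj_in_uniq // => x y xs ys E.
  by rewrite -(unshiftK (ne_a x xs)) -(unshiftK (ne_a y ys)) E.
rewrite all_map size_map; apply/allP => x xs /=.
move: (allP A x xs) (ne_a x xs); rewrite /unshift => /= x_range /eqP x_ne_a.
by case: (ltnP a x) => /= a_x; lia.
Qed.

Lemma is_perm_insert a s : 0 < a <= (size s).+1 -> is_perm s ->
  is_perm (a :: map (shift a) s).
Proof.
rewrite !is_permE /= => Ha /andP[U A].
apply/andP; split.
  apply/andP; split.
    by apply/mapP => -[y _]; rewrite /shift; case: (ltnP y a); lia.
  by rewrite map_inj_uniq //; apply: can_inj (shiftK a).
rewrite size_map Ha /= all_map; apply/allP => x xs /=.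
by move: (allP A x xs); rewrite /shift; case: (ltnP x a); lia.
Qed.

Definition occ (pi : seq nat) (pat : vpattern) (I : seq nat) : Prop :=
  [/\ size I = size pat.1, sorted ltn I, all (fun i => i < size pi) I,
      order_iso (map (nth 0 pi) I) pat.1 &
      forall x, x \in pat.2 -> nth 0 I x = (nth 0 I x.-1).+1].

Definition wf_vpattern (pat : vpattern) : Prop :=
  forall x, x \in pat.2 -> x < size pat.1.

Lemma order_iso_map h u b : {in u &, forall x y, (h x < h y) = (x < y)} ->
  order_iso (map h u) b <-> order_iso u b.
Proof.
move=> hm; rewrite /order_iso size_map; split => -[E H]; split => // i j hi hj.
  by rewrite -H ?size_map // !(nth_map 0) // hm // mem_nth.
by rewrite !(nth_map 0) // hm ?mem_nth // H.
Qed.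

Lemma occ_map h s pat I : {in s &, forall x y, (h x < h y) = (x < y)} ->
  occ (map h s) pat I <-> occ s pat I.
Proof.
move=> hm; rewrite /occ size_map.
suff E : all (fun i => i < size s) I ->
    (order_iso [seq nth 0 (map h s) i | i <- I] pat.1 <->
     order_iso [seq nth 0 s i | i <- I] pat.1).
  by split => -[h1 h2 h3 h4 h5]; split => //; apply/E.
move=> A.
have -> : [seq nth 0 (map h s) i | i <- I] = map h [seq nth 0 s i | i <- I].
  by rewrite -map_comp; apply/eq_in_map => i /(allP A) hi /=; exact: nth_map.
apply: order_iso_map => x y /mapP[i /(allP A) hi ->] /mapP[j /(allP A) hj ->].
by apply: hm; apply: mem_nth.
Qed.

Lemma occ_succ a s pat I : wf_vpattern pat ->
  occ (a :: s) pat (map succn I) <-> occ s pat I.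
Proof.
move=> hX; rewrite /occ size_map all_map -map_comp sorted_map.
have -> : [seq (nth 0 (a :: s) \o succn) i | i <- I] = [seq nth 0 s i | i <- I] by [].
have nthS x : x \in pat.2 -> size I = size pat.1 ->
    nth 0 (map succn I) x = nth 0 I x + 1 /\
    nth 0 (map succn I) x.-1 = nth 0 I x.-1 + 1.
  move=> hx h1; have := hX x hx; rewrite -h1 => hx'.
  by rewrite !(nth_map 0) ?addn1 //; apply: leq_ltn_trans hx'; apply: leq_pred.
split => -[h1 h2 h3 h4 h5]; split => // x hx; have [E1 E2] := nthS x hx h1.
  by have := h5 x hx; rewrite E1 E2 !addn1 => -[].
by rewrite E1 E2 h5.
Qed.

Lemma contains_unshift a s pat : wf_vpattern pat -> a \notin s ->
  contains (map (unshift a) s) pat -> contains (a :: s) pat.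
Proof.
move=> hX as_ [I oc]; exists (map succn I); apply/occ_succ => //.
apply/(occ_map (h := unshift a)) => // x y xs ys.
by apply: ltn_unshift; apply: contraNneq as_ => <-.
Qed.

Lemma contains_cons a s pat : wf_vpattern pat -> contains (a :: s) pat ->
  (exists2 I, occ (a :: s) pat I & nth 0 I 0 = 0) \/ contains s pat.
Proof.
move=> hX [I oc]; have [h0|h0] := eqVneq (nth 0 I 0) 0; first by left; exists I.
right; exists (map predn I); apply/(occ_succ a) => //.
have I_pos : all (leq 1) I.
  case: oc h0 => _ + _ _ _; case: I => [//|i0 I1] /= sortI h0.
  rewrite lt0n h0 /=; apply/allP => x /(allP (order_path_min ltn_trans sortI)).
  exact: leq_ltn_trans.
suff -> : map succn (map predn I) = I by [].
rewrite -map_comp -[RHS]map_id; apply/eq_in_map => x /(allP I_pos) /=.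
exact: prednK.
Qed.

Lemma avoids1 b pi : avoids [:: b] pi <-> ~ contains pi b.
Proof.
split => [H|H b']; first by apply: H; rewrite mem_seq1.
by rewrite mem_seq1 => /eqP ->.
Qed.

Lemma SnB_cons B n a w pi : SnB B n (a :: w) pi ->
  exists2 s, pi = a :: s & [/\ a \notin s, size s = n.-1 & take (size w) s = w].
Proof.
case: pi => [|b s] [sz P _ tk] //; case: tk => <- tk.
exists s => //; split => //; last by rewrite -sz.
by move: P; rewrite is_permE /= => /andP[/andP[]].
Qed.

Lemma SnB_delete_head b n a w s : wf_vpattern b ->
  SnB [:: b] n (a :: w) (a :: s) ->
  SnB [:: b] n.-1 (map (unshift a) w) (map (unshift a) s).
Proof.
move=> hb H; have [_ [<-] [as_ sz tk]] := SnB_cons H; case: H => _ P Av _.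
split; rewrite ?size_map //; first exact: is_perm_dR_head.
- move/avoids1: Av => Av; apply/avoids1 => C.
  by apply: Av; apply: contains_unshift.
- by rewrite -map_take tk.
Qed.

Lemma rev_deletable_nil B p : rev_deletable B p [::].
Proof.
split => // n w _ _; split => [pi | pi1 pi2 _ _ | pi']; rewrite ?subn0 ?dR_nil //.
by move=> H; exists pi'; rewrite ?dR_nil.
Qed.

Lemma later_value_shared m pi pi0 j : is_perm pi -> is_perm pi0 ->
  size pi = size pi0 -> take m pi = take m pi0 -> m <= j < size pi ->
  exists2 j0, m <= j0 < size pi0 & nth 0 pi0 j0 = nth 0 pi j.
Proof.
move=> P P0 eq_size eq_take /andP[hmj hj]; set v := nth 0 pi j.
have v_drop : v \in drop m pi.
  rewrite /v -(subnKC hmj) -nth_drop mem_nth // size_drop.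
  exact: ltn_sub2r (leq_ltn_trans hmj hj) hj.
have v_take : v \notin take m pi0.
  move: (perm_uniq P); rewrite iota_uniq -(cat_take_drop m pi) cat_uniq eq_take.
  by case/and3P => _ /hasPn no_common _; apply: no_common.
have v_drop0 : v \in drop m pi0.
  have : v \in pi0 by rewrite (perm_mem P0) -eq_size -(perm_mem P) mem_nth.
  by rewrite -{1}(cat_take_drop m pi0) mem_cat (negPf v_take).
exists (m + index v (drop m pi0)); last by rewrite -nth_drop nth_index.
by rewrite leq_addr -ltn_subRL -size_drop index_mem.
Qed.

Lemma path_iota_cat i m j : i + m < j -> path ltn i (iota i.+1 m ++ [:: j]).
Proof.
elim: m i => [|m IH] i /=; first by rewrite addn0 andbT.
by move=> h; rewrite ltnSn /=; apply: IH; rewrite addSn -addnS.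
Qed.

Section LastSeparatedPattern.
Variables (k : nat) (sigma : seq nat).
Hypothesis size_sigma : size sigma = k.+2.

Local Notation pat := (sigma, iota 1 k).

Lemma wf_pat : wf_vpattern pat.
Proof. by move=> x; rewrite /= mem_iota size_sigma; lia. Qed.

Lemma occ_at_head pi I : occ pi pat I -> nth 0 I 0 = 0 ->
  I = iota 0 k.+1 ++ [:: nth 0 I k.+1] /\ k < nth 0 I k.+1.
Proof.
move=> [h1 h2 _ _ h5] h0.
have I_init x : x <= k -> nth 0 I x = x.
  elim: x => [//|x IH] hx; rewrite h5 /= ?IH ?mem_iota //; exact: ltnW.
split; last first.
  have := sorted_ltn_nth ltn_trans 0 h2 k k.+1.
  by rewrite !inE h1 size_sigma I_init //; apply.
apply: (@eq_from_nth _ 0); first by rewrite size_cat size_iota /= h1 size_sigma addn1.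
move=> i; rewrite h1 size_sigma ltnS leq_eqVlt => /orP[/eqP -> | hi].
  by rewrite nth_cat size_iota ltnn subnn.
by rewrite nth_cat size_iota hi nth_iota // I_init.
Qed.

Lemma head_occ_transfer pi pi0 I : is_perm pi -> is_perm pi0 ->
  size pi = size pi0 -> take k.+1 pi = take k.+1 pi0 ->
  occ pi pat I -> nth 0 I 0 = 0 -> contains pi0 pat.
Proof.
move=> P P0 eq_size eq_take oc h0.
have [EI hk] := occ_at_head oc h0; set j := nth 0 I k.+1 in EI hk.
case: oc => h1 h2 h3 h4 h5.
have hj : j < size pi by apply: (allP h3); rewrite EI mem_cat mem_seq1 eqxx orbT.
have [|j0 hj0 nth_j0] := later_value_shared P P0 eq_size eq_take (j := j).
  by rewrite hk hj.
have prefix_nth i : i < k.+1 -> nth 0 pi0 i = nth 0 pi i.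
  by move=> hi; rewrite -(nth_take _ hi) -eq_take nth_take.
exists (iota 0 k.+1 ++ [:: j0]); split.
- by rewrite size_cat size_iota size_sigma addn1.
- by apply: path_iota_cat; case/andP: hj0.
- apply/allP => x; rewrite mem_cat mem_iota inE => /orP[|/eqP->]; last by case/andP: hj0.
  by rewrite -eq_size; lia.
- suff -> : map (nth 0 pi0) (iota 0 k.+1 ++ [:: j0]) = map (nth 0 pi) I by [].
  rewrite EI !map_cat; congr (_ ++ _); last by rewrite /= nth_j0.
  by apply/eq_in_map => i; rewrite mem_iota => /andP[_ hi]; apply: prefix_nth.
- move=> x; rewrite mem_iota => hx.
  by rewrite !nth_cat size_iota; case: ifP => ? ; case: ifP => ?; rewrite ?nth_iota //; lia.
Qed.

(* Occurrences through the first position are excluded by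
   transferring them to the known member pi0. *)
Lemma SnB_insert_head n a w pi0 pi' : size w = k ->
  SnB [:: pat] n (a :: w) pi0 ->
  SnB [:: pat] n.-1 (map (unshift a) w) pi' ->
  SnB [:: pat] n (a :: w) (a :: map (shift a) pi').
Proof.
move=> hw H0 [sz' P' /avoids1 Av' tk']; rewrite size_map hw in tk'.
have [s0 E0 [as0 _ tk0]] := SnB_cons H0.
have aw : a \notin w by apply: contra as0; rewrite -tk0 => /mem_take.
case: H0 => sz0 P0 /avoids1 Av0 tk00.
have a_range : 0 < a <= n.
  by move: P0; rewrite is_permE -sz0 E0 => /andP[_ /allP]; apply; apply: mem_head.
have sz : size (a :: map (shift a) pi') = n by rewrite /= size_map sz'; lia.
have tk : take (size (a :: w)) (a :: map (shift a) pi') = a :: w.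
  by rewrite /= hw -map_take tk' unshift_mapK.
have P : is_perm (a :: map (shift a) pi') by apply: is_perm_insert; rewrite ?sz'; lia.
split => //; apply/avoids1.
case/(contains_cons wf_pat) => [[I oc h0] | [I oc]].
  apply: Av0; apply: (head_occ_transfer P P0 _ _ oc h0); first by rewrite sz.
  by move: tk tk00; rewrite /= hw => -> ->.
by apply: Av'; exists I; apply/(occ_map (h := shift a)) => // x y _ _; apply: ltn_shift.
Qed.

Lemma rev_deletable_head p : size p = k.+1 -> rev_deletable [:: pat] p [:: 1].
Proof.
move=> hp; split => //; first by rewrite /= hp.
move=> n w [hw _ _ _] [pi0 H0]; case: w hw H0 => [|a w]; rewrite hp // => -[hw] H0.
rewrite subn1 dR_head; split.
- move=> pi H; have [s E _] := SnB_cons H; subst pi.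
  by rewrite dR_head; apply: SnB_delete_head wf_pat _.
- move=> pi1 pi2 H1 H2.
  have [s1 -> [as1 _ _]] := SnB_cons H1; have [s2 -> [as2 _ _]] := SnB_cons H2.
  by rewrite !dR_head => E; rewrite -(unshift_mapK as1) E unshift_mapK.
- move=> pi' H'; exists (a :: map (shift a) pi'); first exact: SnB_insert_head H0 H'.
  by rewrite dR_head shift_mapK.
Qed.

End LastSeparatedPattern.

Definition perms (m : nat) : seq (seq nat) := permutations (iota 1 m).

Lemma mem_perms p m : (p \in perms m) = is_perm p && (size p == m).
Proof.
rewrite /perms mem_permutations /is_perm; apply/idP/andP.
  by move=> H; have := perm_size H; rewrite size_iota => E; rewrite E eqxx.
by case=> H /eqP <-.
Qed.

Definition head_scheme (k : nat) : seq triple :=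
  [seq (p, [::], [::]) | p <- flatten [seq perms m | m <- iota 0 k.+1]] ++
  [seq (p, [::], [:: 1]) | p <- perms k.+1].

Lemma mem_head_scheme k e : e \in head_scheme k <->
  (exists p, [/\ e = (p, [::], [::]), is_perm p & size p <= k]) \/
  (exists p, [/\ e = (p, [::], [:: 1]), is_perm p & size p = k.+1]).
Proof.
rewrite mem_cat; split.
  case/orP => [/mapP[p /flatten_mapP[m hm hp] ->] | /mapP[p hp ->]].
    by left; exists p; move: hp hm; rewrite mem_perms mem_iota => /andP[P /eqP ->]; split.
  by right; exists p; move: hp; rewrite mem_perms => /andP[P /eqP ->].
case => [[p [-> P hs]] | [p [-> P hs]]]; apply/orP; [left|right]; apply: map_f.
  by apply/flatten_mapP; exists (size p); [rewrite mem_iota | rewrite mem_perms P eqxx].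
by rewrite mem_perms P hs eqxx.
Qed.

Lemma first_entries_head_scheme k p : is_perm p -> size p <= k.+1 ->
  p \in first_entries (head_scheme k).
Proof.
move=> P; rewrite leq_eqVlt ltnS => /orP[/eqP hp | hp].
  by apply/mapP; exists (p, [::], [:: 1]) => //; apply/mem_head_scheme; right; exists p.
by apply/mapP; exists (p, [::], [::]) => //; apply/mem_head_scheme; left; exists p.
Qed.

Lemma head_scheme_enum k sigma : size sigma = k.+2 ->
  enum_scheme [:: (sigma, iota 1 k)] (head_scheme k).
Proof.
move=> size_sigma; split.
- by apply/mem_head_scheme; left; exists [::].
- move=> e /mem_head_scheme [[p [-> P _]] | [p [-> P hp]]]; split => //=.
    exact: rev_deletable_nil.
  exact: rev_deletable_head.
- move=> e /mem_head_scheme [[p [-> _ hp]] | [p [-> _ _]]] // _ _ p' [hs' [P' _]].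
  by apply: first_entries_head_scheme; rewrite // hs'.
- move=> e /mem_head_scheme [[p [-> _ _]] | [p [-> P hp]]] //= _.
  case: p P hp => [|a s] P // [hp].
  rewrite dR_head; apply: first_entries_head_scheme; first exact: is_perm_dR_head.
  by rewrite size_map hp.
Qed.

Lemma foldr_maxn_le (s : seq nat) m : all (fun x => x <= m) s -> foldr maxn 0 s <= m.
Proof. by elim: s => //= x s IH /andP[h1 h2]; rewrite geq_max h1 IH. Qed.

Lemma foldr_maxn_ge (s : seq nat) m : m \in s -> m <= foldr maxn 0 s.
Proof.
elim: s => //= x s IH; rewrite inE leq_max => /orP[/eqP->|/IH ->]; by rewrite ?leqnn ?orbT.
Qed.

Lemma depth_head_scheme k : depth (head_scheme k) = k.+1.
Proof.
rewrite /depth; apply/anti_leq/andP; split.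
  apply/foldr_maxn_le/allP => x /mapP[e /mem_head_scheme[[p [-> _ hp]]|[p [-> _ hp]]] ->] /=.
    exact: leq_trans hp _.
  by rewrite hp.
apply/foldr_maxn_ge/mapP; exists (iota 1 k.+1, [::], [:: 1]); last by rewrite /= size_iota.
apply/mem_head_scheme; right; exists (iota 1 k.+1).
by rewrite /is_perm size_iota.
Qed.

Theorem mainTheorem7 (t : nat) (sigma : seq nat) :
  2 <= t -> size sigma = t -> is_perm sigma ->
  exists E : seq triple,
    [/\ enum_scheme [:: (sigma, iota 1 (t - 2))] E,
        depth E = t - 1 &
        forall e, e \in E -> e.2 = [::] \/ e.2 = [:: 1]].
Proof.
case: t => [|[|k]] // _ size_sigma _.
rewrite !subSS !subn0.
exists (head_scheme k); split.
- exact: head_scheme_enum.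
- exact: depth_head_scheme.
- by move=> e /mem_head_scheme[[p [-> _ _]]|[p [-> _ _]]]; [left|right].
Qed.
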